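(* Assume excitatory coupling: $\varepsilon_{ij}\ge0$ for all $i,j$ and $\varepsilon>0$, with $U(\tau)+\varepsilon<1$. Then for every ordering $\mathcal O$ the following hold. 1. For each $i$, $p_{i,0}>p_{i,1}>\dots>p_{i,k_i}=1$. 2. $A_{ij}(\mathcal O)\le 0$ for all $j\neq i$, and $A_0>1$. 3. Every eigenvalue $\lambda$ of $A(\mathcal O)$ lies in the closed disk $\{z\in\mathbb C: |z-A_0|\le A_0-1\}$. This disk lies outside the open unit disk and touches the unit circle only at $z=1$; in particular $|\lambda|\ge1$.
   Context: Let $U$ be a twice continuously differentiable, strictly increasing function on an interval $I\subseteq\mathbb R$ containing $[0,1]$. Assume $U'>0$ and $U''<0$ on $I$, $U(0)=0$ and $U(1)=1$; $U^{-1}$ denotes its inverse. Fix $N\ge 2$ and a delay $\tau\in(0,1)$. For each $i$ fix a nonempty set $\mathrm{Pre}(i)\subseteq\{1,\dots,N\}\setminus\{i\}$ and put $k_i=|\mathrm{Pre}(i)|$. Fix real couplings $\varepsilon_{ij}$ with $\varepsilon_{ij}\neq0$ if and only if $j\in\mathrm{Pre}(i)$, normalized so that $\sum_j\varepsilon_{ij}=\varepsilon$ for every $i$. An ordering $\mathcal O$ is a choice, for each $i$, of an enumeration $j_1(i),\dots,j_{k_i}(i)$ of $\mathrm{Pre}(i)$. For $n\in\{0,\dots,k_i\}$ define $$p_{i,n}=\frac{U'\Big(U^{-1}\big(U(\tau)+\sum_{m=1}^{n}\varepsilon_{ij_m(i)}\big)\Big)}{U'\big(U^{-1}(U(\tau)+\varepsilon)\big)}.$$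 The stability matrix $A(\mathcal O)$ has entries - $A_{ii}=p_{i,0}$; - $A_{ij}=p_{i,n}-p_{i,n-1}$ if $j=j_n(i)$; - $A_{ij}=0$ if $j\notin\mathrm{Pre}(i)\cup\{i\}$. Write $A_0:=p_{i,0}=U'(\tau)/U'\big(U^{-1}(U(\tau)+\varepsilon)\big)$, which does not depend on $i$. *)

From Stdlib Require Import Reals Lra List.
Import ListNotations.
Open Scope R_scope.

Fixpoint sumN (n : nat) (f : nat -> R) : R :=
  match n with
  | O => 0
  | S m => sumN m f + f m
  end.

(* 0-based position of j in l (length l if absent) *)
Fixpoint idx (j : nat) (l : list nat) : nat :=
  match l with
  | nil => O
  | x :: l' => if Nat.eqb x j then O else S (idx j l')
  end.

(* sum_{m=1}^{n} eps_{i j_m(i)}, where Ord i = [j_1(i); ...; j_{k_i}(i)] *)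
Definition partial_sum (epsi : nat -> R) (Oi : list nat) (n : nat) : R :=
  fold_right Rplus 0 (map epsi (firstn n Oi)).

(* p_{i,n}; U1 = U', Uinv = U^{-1}, epsT = epsilon, O i = ordering of Pre(i) *)
Definition p_coef (U U1 Uinv : R -> R) (tau epsT : R) (eps : nat -> nat -> R)
  (Ord : nat -> list nat) (i n : nat) : R :=
  U1 (Uinv (U tau + partial_sum (eps i) (Ord i) n)) / U1 (Uinv (U tau + epsT)).

Definition stabA (U U1 Uinv : R -> R) (tau epsT : R) (eps : nat -> nat -> R)
  (Ord : nat -> list nat) (i j : nat) : R :=
  let p := p_coef U U1 Uinv tau epsT eps Ord i in
  if Nat.eqb i j then p 0%nat
  else if in_dec Nat.eq_dec j (Ord i) then p (S (idx j (Ord i))) - p (idx j (Ord i))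
  else 0.

(* (lr + i li) is a complex eigenvalue of the real N x N matrix A:
   there is a nonzero complex vector v = vr + i vi with A v = lambda v. *)
Definition is_eigenvalue (N : nat) (A : nat -> nat -> R) (lr li : R) : Prop :=
  exists vr vi : nat -> R,
    (exists k, (k < N)%nat /\ (vr k <> 0 \/ vi k <> 0)) /\
    forall i, (i < N)%nat ->
      sumN N (fun j => A i j * vr j) = lr * vr i - li * vi i /\
      sumN N (fun j => A i j * vi j) = lr * vi i + li * vr i.

Definition cmod (x y : R) : R := sqrt (x * x + y * y).

From Stdlib Require Import Reals Lra List Lia.
From Stdlib Require Import Ranalysis5.
Open Scope R_scope.

(* The slopes p_{i,n} all have the form h(s_n)/h(epsT), where
   h(s) = U'(U^{-1}(U(tau) + s)) is the "response" of the phase profile and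
   s_n is the n-th partial sum of the couplings of row i in the chosen order.
   Since U is increasing and concave, U^{-1} is increasing and U' decreasing, so
   h is strictly decreasing; the partial sums increase strictly from 0 to epsT
   for excitatory couplings.  This gives the chain p_{i,0} > ... > p_{i,k_i} = 1
   (part 1), hence nonpositive off-diagonal entries and A0 > 1 (part 2).
   The off-diagonal entries of row i telescope to p_{i,k_i} - p_{i,0} = 1 - A0,
   so every row has diagonal entry A0 and absolute off-diagonal sum A0 - 1; a
   Gershgorin argument (at a coordinate of maximal modulus of an eigenvector)
   places every eigenvalue in the disk |z - A0| <= A0 - 1, and elementary
   geometry shows this disk meets the closed unit disk only at z = 1 (part 3). *)

(** * Moduli of complex numbers given by real and imaginary parts *)

Lemma cmod_nonneg x y : 0 <= cmod x y.
Proof. apply sqrt_pos. Qed.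

Lemma cmod_sq x y : cmod x y * cmod x y = x * x + y * y.
Proof. unfold cmod. apply sqrt_sqrt. nra. Qed.

Lemma cmod00 : cmod 0 0 = 0.
Proof. unfold cmod. replace (0 * 0 + 0 * 0) with 0 by ring. apply sqrt_0. Qed.

Lemma cmod_mul a b x y : cmod (a * x - b * y) (a * y + b * x) = cmod a b * cmod x y.
Proof.
  unfold cmod.
  replace ((a * x - b * y) * (a * x - b * y) + (a * y + b * x) * (a * y + b * x))
    with ((a * a + b * b) * (x * x + y * y)) by ring.
  apply sqrt_mult; nra.
Qed.

Lemma cmod_scale r x y : cmod (r * x) (r * y) = Rabs r * cmod x y.
Proof.
  unfold cmod.
  replace (r * x * (r * x) + r * y * (r * y)) with (Rsqr r * (x * x + y * y))
    by (unfold Rsqr; ring).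
  rewrite sqrt_mult by (try apply Rle_0_sqr; nra).
  now rewrite sqrt_Rsqr_abs.
Qed.

Lemma cmod_dot a b c d : a * b + c * d <= cmod a c * cmod b d.
Proof.
  pose proof (cmod_nonneg a c); pose proof (cmod_nonneg b d).
  assert (Hsq : (cmod a c * cmod b d) * (cmod a c * cmod b d)
                = (a * a + c * c) * (b * b + d * d)).
  { rewrite <- !cmod_sq. ring. }
  pose proof (Rle_0_sqr (a * d - b * c)); unfold Rsqr in *.
  destruct (Rle_dec (a * b + c * d) 0); [nra |].
  assert (Hprod : 0 <= cmod a c * cmod b d) by nra.
  nra.
Qed.

Lemma cmod_triangle a b c d : cmod (a + b) (c + d) <= cmod a c + cmod b d.
Proof.
  pose proof (cmod_nonneg (a + b) (c + d)); pose proof (cmod_nonneg a c);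
  pose proof (cmod_nonneg b d); pose proof (cmod_dot a b c d).
  pose proof (cmod_sq (a + b) (c + d)); pose proof (cmod_sq a c); pose proof (cmod_sq b d).
  nra.
Qed.

Lemma disk_outside_unit_disk c x y : 1 < c -> cmod (x - c) y <= c - 1 ->
  1 <= cmod x y /\ (cmod x y = 1 -> x = 1 /\ y = 0).
Proof.
  intros Hc H. pose proof (cmod_sq (x - c) y). pose proof (cmod_nonneg (x - c) y).
  assert (Hq : (x - c) * (x - c) + y * y <= (c - 1) * (c - 1)) by nra.
  assert (Hx : 1 <= x) by nra.
  split.
  - unfold cmod. rewrite <- sqrt_1. apply sqrt_le_1_alt. nra.
  - intros E. pose proof (cmod_sq x y) as Exy. rewrite E in Exy. nra.
Qed.

Lemma disk_contains_one c : 1 < c -> cmod (1 - c) 0 <= c - 1.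
Proof.
  intros Hc. unfold cmod.
  replace ((1 - c) * (1 - c) + 0 * 0) with ((c - 1) * (c - 1)) by ring.
  rewrite sqrt_square; lra.
Qed.

Lemma sumN_ext N f g : (forall j, (j < N)%nat -> f j = g j) -> sumN N f = sumN N g.
Proof.
  induction N; simpl; intros H; auto.
  rewrite IHN by (intros; apply H; lia). now rewrite H by lia.
Qed.

Lemma sumN_plus N f g : sumN N (fun j => f j + g j) = sumN N f + sumN N g.
Proof. induction N; simpl; [ring | rewrite IHN; ring]. Qed.

Lemma sumN_opp N f : sumN N (fun j => - f j) = - sumN N f.
Proof. induction N; simpl; [ring | rewrite IHN; ring]. Qed.

Lemma sumN_scal N f c : sumN N (fun j => f j * c) = sumN N f * c.
Proof. induction N; simpl; [ring | rewrite IHN; ring]. Qed.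

Lemma sumN_le N f g : (forall j, (j < N)%nat -> f j <= g j) -> sumN N f <= sumN N g.
Proof.
  induction N; simpl; intros H; [lra |].
  pose proof (H N ltac:(lia)). assert (sumN N f <= sumN N g) by (apply IHN; auto).
  lra.
Qed.

Lemma sumN_zero N f : (forall j, (j < N)%nat -> f j = 0) -> sumN N f = 0.
Proof.
  intros H. rewrite (sumN_ext N f (fun _ => 0)) by auto.
  clear. induction N; simpl; [ring | rewrite IHN; ring].
Qed.

Lemma sumN_delta N x c : (x < N)%nat ->
  sumN N (fun j => if Nat.eqb j x then c else 0) = c.
Proof.
  induction N; intros Hx; [lia |]. simpl.
  destruct (Nat.eq_dec x N) as [-> | Hne].
  - rewrite Nat.eqb_refl, sumN_zero; [ring |].
    intros j Hj. destruct (Nat.eqb_spec j N); [lia | auto].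
  - rewrite IHN by lia. destruct (Nat.eqb_spec N x); [lia | ring].
Qed.

Lemma sumN_support N f l : NoDup l -> (forall j, In j l -> (j < N)%nat) ->
  (forall j, (j < N)%nat -> ~ In j l -> f j = 0) ->
  sumN N f = fold_right Rplus 0 (map f l).
Proof.
  revert f. induction l as [| x l IH]; intros f Hnd Hin Hout; simpl.
  - apply sumN_zero. auto.
  - inversion Hnd as [| ? ? Hx Hnd']; subst.
    rewrite (sumN_ext N f (fun j => (if Nat.eqb j x then f x else 0)
                                   + (if in_dec Nat.eq_dec j l then f j else 0))).
    + rewrite sumN_plus, sumN_delta by (apply Hin; simpl; auto). f_equal.
      rewrite (IH (fun j => if in_dec Nat.eq_dec j l then f j else 0)); auto.
      * f_equal. apply map_ext_in. intros j Hj. now destruct (in_dec Nat.eq_dec j l).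
      * intros j Hj. apply Hin. simpl. auto.
      * intros j _ Hj. now destruct (in_dec Nat.eq_dec j l).
    + intros j Hj. destruct (Nat.eqb_spec j x) as [-> |].
      * destruct (in_dec Nat.eq_dec x l); [tauto | ring].
      * destruct (in_dec Nat.eq_dec j l); [ring |].
        rewrite Hout; auto; [ring |]. simpl. intuition.
Qed.

Lemma sumN_split_diag N (a v : nat -> R) k : (k < N)%nat ->
  sumN N (fun j => a j * v j)
  = a k * v k + sumN N (fun j => (if Nat.eqb j k then 0 else a j) * v j).
Proof.
  intros Hk.
  rewrite (sumN_ext N _ (fun j => (if Nat.eqb j k then a k * v k else 0)
                                  + (if Nat.eqb j k then 0 else a j) * v j)).
  - now rewrite sumN_plus, sumN_delta.
  - intros j _. destruct (Nat.eqb_spec j k) as [-> |]; ring.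
Qed.

Lemma sumN_cmod N c x y :
  cmod (sumN N (fun j => c j * x j)) (sumN N (fun j => c j * y j))
  <= sumN N (fun j => Rabs (c j) * cmod (x j) (y j)).
Proof.
  induction N; simpl.
  - rewrite cmod00. lra.
  - eapply Rle_trans; [apply cmod_triangle |]. rewrite cmod_scale. lra.
Qed.

Lemma exists_argmax N (g : nat -> R) : (0 < N)%nat ->
  exists k, (k < N)%nat /\ forall j, (j < N)%nat -> g j <= g k.
Proof.
  induction N as [| N IH]; intros HN; [lia |]. destruct N as [| N].
  - exists O. split; [lia |]. intros j Hj. replace j with O by lia. lra.
  - destruct IH as [k [Hk Hm]]; [lia |].
    destruct (Rle_dec (g k) (g (S N))).
    + exists (S N). split; [lia |]. intros j Hj.
      destruct (Nat.eq_dec j (S N)) as [-> |]; [lra |]. pose proof (Hm j ltac:(lia)). lra.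
    + exists k. split; [lia |]. intros j Hj.
      destruct (Nat.eq_dec j (S N)) as [-> |]; [lra |]. apply Hm. lia.
Qed.

(** * Gershgorin bound for matrices with a common diagonal entry *)

(* Evaluate the
   eigen-equation at a coordinate where the eigenvector has maximal modulus. *)
Lemma gershgorin_common_center N (A : nat -> nat -> R) c r lr li :
  (forall i, (i < N)%nat -> A i i = c) ->
  (forall i, (i < N)%nat ->
     sumN N (fun j => if Nat.eqb j i then 0 else Rabs (A i j)) <= r) ->
  is_eigenvalue N A lr li -> cmod (lr - c) li <= r.
Proof.
  intros Hdiag Hrad [vr [vi [[k0 [Hk0 Hnz]] Heig]]].
  destruct (exists_argmax N (fun j => cmod (vr j) (vi j))) as [k [Hk Hmax]]; [lia |].
  cbv beta in Hmax.
  set (M := cmod (vr k) (vi k)).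
  assert (HM : 0 < M).
  { apply Rlt_le_trans with (cmod (vr k0) (vi k0)); [| now apply Hmax].
    unfold cmod. apply sqrt_lt_R0. destruct Hnz; nra. }
  set (B := fun j => if Nat.eqb j k then 0 else A k j).
  destruct (Heig k Hk) as [E1 E2].
  rewrite (sumN_split_diag N (A k) vr k Hk), Hdiag in E1 by exact Hk.
  rewrite (sumN_split_diag N (A k) vi k Hk), Hdiag in E2 by exact Hk.
  apply Rmult_le_reg_r with M; [exact HM |]. unfold M. rewrite <- cmod_mul.
  replace ((lr - c) * vr k - li * vi k) with (sumN N (fun j => B j * vr j)) by (unfold B; lra).
  replace ((lr - c) * vi k + li * vr k) with (sumN N (fun j => B j * vi j)) by (unfold B; lra).
  eapply Rle_trans; [apply sumN_cmod |].
  apply Rle_trans with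
    (sumN N (fun j => (if Nat.eqb j k then 0 else Rabs (A k j)) * cmod (vr k) (vi k))).
  - apply sumN_le. intros j Hj. unfold B.
    destruct (Nat.eqb j k); [rewrite Rabs_R0; lra |].
    apply Rmult_le_compat_l; [apply Rabs_pos | now apply Hmax].
  - rewrite sumN_scal. apply Rmult_le_compat_r; [apply cmod_nonneg | now apply Hrad].
Qed.

(** * The phase profile U *)

Record phase_profile (U U1 U2 Uinv : R -> R) (I : R -> Prop) : Prop := {
  pp_interval : forall x y z, I x -> I z -> x <= y -> y <= z -> I y;
  pp_unit : forall x, 0 <= x <= 1 -> I x;
  pp_deriv : forall x, I x -> derivable_pt_lim U x (U1 x);
  pp_deriv2 : forall x, I x -> derivable_pt_lim U1 x (U2 x);
  pp_incr : forall x, I x -> 0 < U1 x;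
  pp_concave : forall x, I x -> U2 x < 0;
  pp_zero : U 0 = 0;
  pp_one : U 1 = 1;
  pp_inv : forall y, (exists x, I x /\ U x = y) -> I (Uinv y) /\ U (Uinv y) = y
}.

Lemma strict_incr_of_pos_deriv (f f' : R -> R) (I : R -> Prop) :
  (forall x y z, I x -> I z -> x <= y -> y <= z -> I y) ->
  (forall x, I x -> derivable_pt_lim f x (f' x)) ->
  (forall x, I x -> 0 < f' x) ->
  forall x y, I x -> I y -> x < y -> f x < f y.
Proof.
  intros Hint Hd Hpos x y Hx Hy Hxy.
  destruct (MVT_cor2 f f' x y Hxy) as [c [Hc Hcin]].
  - intros c Hc. apply Hd, (Hint x c y); tauto.
  - assert (HIc : I c) by (apply (Hint x c y); auto; lra).
    pose proof (Hpos c HIc). nra.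
Qed.

(* The "response" h(s) = U'(U^{-1}(U(tau) + s)): slope of U after a phase
   jump of size s from tau; p_{i,n} = h(s_n) / h(epsT). *)
Definition response (U U1 Uinv : R -> R) (tau s : R) : R := U1 (Uinv (U tau + s)).

Section PhaseProfile.

Context {U U1 U2 Uinv : R -> R} {I : R -> Prop}.
Hypothesis Hprof : phase_profile U U1 U2 Uinv I.

Lemma U_incr x y : I x -> I y -> x < y -> U x < U y.
Proof.
  apply (strict_incr_of_pos_deriv U U1 I (pp_interval _ _ _ _ _ Hprof)
           (pp_deriv _ _ _ _ _ Hprof) (pp_incr _ _ _ _ _ Hprof)).
Qed.

(* Concavity: U' is strictly decreasing (apply the above to -U'). *)
Lemma U1_decr x y : I x -> I y -> x < y -> U1 y < U1 x.
Proof.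
  intros Hx Hy Hxy.
  assert (H : (- U1)%F x < (- U1)%F y).
  { apply (strict_incr_of_pos_deriv (- U1)%F (fun z => - U2 z) I
             (pp_interval _ _ _ _ _ Hprof)); auto.
    - intros z Hz. apply derivable_pt_lim_opp, (pp_deriv2 _ _ _ _ _ Hprof), Hz.
    - intros z Hz. pose proof (pp_concave _ _ _ _ _ Hprof z Hz). lra. }
  unfold opp_fct in H. lra.
Qed.

(* Every value in [0,1] is attained (intermediate value theorem), so Uinv
   inverts U there. *)
Lemma Uinv_spec y : 0 <= y <= 1 -> I (Uinv y) /\ U (Uinv y) = y.
Proof.
  intros Hy. apply (pp_inv _ _ _ _ _ Hprof).
  destruct (f_interv_is_interv U 0 1 y) as [x [Hx Ex]].
  - lra.
  - rewrite (pp_zero _ _ _ _ _ Hprof), (pp_one _ _ _ _ _ Hprof). lra.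
  - intros x Hx. apply derivable_continuous_pt.
    exists (U1 x). apply (pp_deriv _ _ _ _ _ Hprof), (pp_unit _ _ _ _ _ Hprof), Hx.
  - exists x. split; [apply (pp_unit _ _ _ _ _ Hprof) |]; auto.
Qed.

Lemma Uinv_incr y1 y2 : 0 <= y1 -> y1 < y2 -> y2 <= 1 -> Uinv y1 < Uinv y2.
Proof.
  intros H1 H12 H2.
  destruct (Uinv_spec y1) as [I1 E1]; [lra |]. destruct (Uinv_spec y2) as [I2 E2]; [lra |].
  destruct (Rlt_or_le (Uinv y1) (Uinv y2)) as [| [Hlt | Heq]]; auto.
  - pose proof (U_incr _ _ I2 I1 Hlt). lra.
  - rewrite <- Heq in E1. lra.
Qed.

Lemma Uinv_U x : I x -> 0 <= U x <= 1 -> Uinv (U x) = x.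
Proof.
  intros Hx HUx. destruct (Uinv_spec (U x) HUx) as [Ix Ex].
  destruct (Rtotal_order (Uinv (U x)) x) as [Hlt | [Heq | Hgt]]; auto.
  - pose proof (U_incr _ _ Ix Hx Hlt). lra.
  - pose proof (U_incr _ _ Hx Ix Hgt). lra.
Qed.

Lemma response_pos tau s : 0 <= U tau + s <= 1 -> 0 < response U U1 Uinv tau s.
Proof. intros H. apply (pp_incr _ _ _ _ _ Hprof), Uinv_spec, H. Qed.

Lemma response_decr tau s t : 0 <= U tau -> 0 <= s -> s < t -> U tau + t <= 1 ->
  response U U1 Uinv tau t < response U U1 Uinv tau s.
Proof.
  intros Htau Hs Hst Ht. unfold response.
  apply U1_decr; [apply Uinv_spec; lra | apply Uinv_spec; lra | apply Uinv_incr; lra].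
Qed.

Lemma response_zero tau : I tau -> 0 <= U tau <= 1 -> response U U1 Uinv tau 0 = U1 tau.
Proof. intros Hi Hu. unfold response. now rewrite Rplus_0_r, Uinv_U. Qed.

End PhaseProfile.

Lemma partial_sum_S f l n : (n < length l)%nat ->
  partial_sum f l (S n) = partial_sum f l n + f (nth n l O).
Proof.
  unfold partial_sum. revert n; induction l as [| x l IH]; intros n Hn; simpl in *; [lia |].
  destruct n; simpl; [ring |]. rewrite IH by lia. ring.
Qed.

Lemma partial_sum_bounds f l n : (forall j, In j l -> 0 <= f j) ->
  0 <= partial_sum f l n <= partial_sum f l (length l).
Proof.
  unfold partial_sum. revert n; induction l as [| x l IH]; intros n Hf.
  - rewrite firstn_nil. simpl. lra.
  - assert (Hl : forall m, 0 <= fold_right Rplus 0 (map f (firstn m l))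
                           <= fold_right Rplus 0 (map f (firstn (length l) l)))
      by (intros m; apply IH; intros j Hj; apply Hf; simpl; auto).
    pose proof (Hf x (or_introl eq_refl)). pose proof (Hl O).
    destruct n as [| n]; simpl; [simpl in *; lra |]. pose proof (Hl n). lra.
Qed.

Lemma ordering_weights N (f : nat -> R) (l : list nat) :
  NoDup l -> (forall j, In j l -> (j < N)%nat) ->
  (forall j, (j < N)%nat -> (f j <> 0 <-> In j l)) ->
  (forall j, (j < N)%nat -> 0 <= f j) ->
  (forall j, In j l -> 0 < f j) /\ partial_sum f l (length l) = sumN N f.
Proof.
  intros Hnd Hin Hsupp Hnn. split.
  - intros j Hj. pose proof (Hin j Hj) as HjN. pose proof (Hnn j HjN).
    assert (f j <> 0) by (apply Hsupp; auto). lra.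
  - unfold partial_sum. rewrite firstn_all. symmetry. apply sumN_support; auto.
    intros j Hj Hn. destruct (Req_dec (f j) 0) as [| Hne]; auto.
    exfalso. apply Hn, Hsupp; auto.
Qed.

Lemma idx_lt j l : In j l -> (idx j l < length l)%nat.
Proof.
  induction l as [| x l IH]; simpl; intros Hj; [tauto |].
  destruct (Nat.eqb_spec x j); [lia |]. destruct Hj; [congruence |]. specialize (IH H). lia.
Qed.

Lemma telescope l q : NoDup l ->
  fold_right Rplus 0 (map (fun j => q (S (idx j l)) - q (idx j l)) l) = q (length l) - q O.
Proof.
  revert q; induction l as [| x l IH]; intros q Hnd; simpl; [ring |].
  inversion Hnd as [| ? ? Hx Hnd']; subst. rewrite Nat.eqb_refl.
  rewrite (map_ext_in _ (fun j => q (S (S (idx j l))) - q (S (idx j l)))).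
  - rewrite (IH (fun n => q (S n)) Hnd'). ring.
  - intros j Hj. destruct (Nat.eqb_spec x j); [subst; tauto | reflexivity].
Qed.

(** * The slopes p_{i,n} and the rows of A(O) *)

Section Row.

Variables (U U1 Uinv : R -> R) (tau epsT : R) (eps : nat -> nat -> R).
Variables (Ord : nat -> list nat) (i : nat).

Let p := p_coef U U1 Uinv tau epsT eps Ord i.
Let h := response U U1 Uinv tau.

(* Part 1 for one row: the slopes decrease strictly along the ordering and end
   at 1, because p_{i,n} = h(s_n)/h(epsT) with h decreasing and s_n
   increasing from 0 to epsT. *)
Lemma slope_chain :
  (forall s t, 0 <= s -> s < t -> t <= epsT -> h t < h s) ->
  0 < h epsT ->
  (forall j, In j (Ord i) -> 0 < eps i j) ->
  partial_sum (eps i) (Ord i) (length (Ord i)) = epsT ->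
  (forall n, (n < length (Ord i))%nat -> p n > p (S n)) /\ p (length (Ord i)) = 1.
Proof.
  intros Hdec Hpos Hw Hfull. split.
  - intros n Hn. unfold p, p_coef, Rdiv. apply Rlt_gt.
    apply Rmult_lt_compat_r; [now apply Rinv_0_lt_compat |].
    assert (Hb : forall m, 0 <= partial_sum (eps i) (Ord i) m <= epsT).
    { intros m. rewrite <- Hfull. apply partial_sum_bounds.
      intros j Hj. pose proof (Hw j Hj). lra. }
    pose proof (Hb n). pose proof (Hb (S n)).
    apply Hdec; try lra.
    rewrite partial_sum_S by exact Hn. pose proof (Hw _ (nth_In _ O Hn)). lra.
  - unfold p, p_coef. rewrite Hfull. apply Rinv_r. unfold h, response in Hpos. lra.
Qed.

Lemma row_offdiag_sum N :
  NoDup (Ord i) -> (forall j, In j (Ord i) -> (j < N)%nat /\ j <> i) ->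
  sumN N (fun j => if Nat.eqb j i then 0 else stabA U U1 Uinv tau epsT eps Ord i j)
  = p (length (Ord i)) - p O.
Proof.
  intros Hnd Hin.
  assert (Hentry : forall j, j <> i ->
            stabA U U1 Uinv tau epsT eps Ord i j
            = if in_dec Nat.eq_dec j (Ord i) then p (S (idx j (Ord i))) - p (idx j (Ord i))
              else 0).
  { intros j Hji. unfold stabA. now destruct (Nat.eqb_spec i j); [congruence |]. }
  rewrite (sumN_support N _ (Ord i) Hnd).
  - rewrite <- (telescope (Ord i) p Hnd). f_equal. apply map_ext_in. intros j Hj.
    destruct (Nat.eqb_spec j i) as [-> | Hji]; [exfalso; now apply (Hin i Hj) |].
    rewrite Hentry by exact Hji. now destruct (in_dec Nat.eq_dec j (Ord i)).
  - intros j Hj. apply Hin, Hj.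
  - intros j _ Hj. destruct (Nat.eqb_spec j i) as [| Hji]; [reflexivity |].
    rewrite Hentry by exact Hji. now destruct (in_dec Nat.eq_dec j (Ord i)).
Qed.

(* Part 2 for one row: an off-diagonal entry is 0 or a difference of two
   consecutive slopes, hence nonpositive. *)
Lemma stabA_offdiag_nonpos j :
  (forall n, (n < length (Ord i))%nat -> p n > p (S n)) ->
  j <> i -> stabA U U1 Uinv tau epsT eps Ord i j <= 0.
Proof.
  intros Hchain Hji. unfold stabA. destruct (Nat.eqb_spec i j); [congruence |].
  destruct (in_dec Nat.eq_dec j (Ord i)) as [Hin |]; [| lra].
  pose proof (Hchain _ (idx_lt _ _ Hin)). unfold p in *. lra.
Qed.

(* The Gershgorin radius of row i: since the off-diagonal entries are
   nonpositive, their absolute values sum to p_{i,0} - p_{i,k_i}. *)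
Lemma row_radius N :
  NoDup (Ord i) -> (forall j, In j (Ord i) -> (j < N)%nat /\ j <> i) ->
  (forall n, (n < length (Ord i))%nat -> p n > p (S n)) ->
  sumN N (fun j => if Nat.eqb j i then 0 else Rabs (stabA U U1 Uinv tau epsT eps Ord i j))
  = p O - p (length (Ord i)).
Proof.
  intros Hnd Hin Hchain.
  rewrite (sumN_ext N _ (fun j => - (if Nat.eqb j i then 0 else
                                     stabA U U1 Uinv tau epsT eps Ord i j))).
  - rewrite sumN_opp, row_offdiag_sum by assumption. ring.
  - intros j _. destruct (Nat.eqb_spec j i) as [| Hji]; [ring |].
    apply Rabs_left1, stabA_offdiag_nonpos; assumption.
Qed.

End Row.

Lemma ratio_gt_1 a d : 0 < d -> d < a -> a / d > 1.
Proof.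
  intros Hd Hda. apply Rlt_gt, (Rmult_lt_reg_r d); [exact Hd |].
  unfold Rdiv. rewrite Rmult_assoc, Rinv_l, Rmult_1_l, Rmult_1_r by lra. exact Hda.
Qed.


Theorem mainTheorem4
  (U U1 U2 Uinv : R -> R) (I : R -> Prop)
  (HIint : forall x y z, I x -> I z -> x <= y -> y <= z -> I y)
  (HI01 : forall x, 0 <= x <= 1 -> I x)
  (HU1 : forall x, I x -> derivable_pt_lim U x (U1 x))
  (HU2 : forall x, I x -> derivable_pt_lim U1 x (U2 x))
  (HU2c : forall x, I x -> continuity_pt U2 x)
  (HU1pos : forall x, I x -> 0 < U1 x)
  (HU2neg : forall x, I x -> U2 x < 0)
  (HU0 : U 0 = 0) (HU1' : U 1 = 1)
  (HUinv : forall y, (exists x, I x /\ U x = y) -> I (Uinv y) /\ U (Uinv y) = y)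
  (N : nat) (HN : (2 <= N)%nat)
  (tau : R) (Htau : 0 < tau < 1)
  (Pre : nat -> nat -> Prop)
  (HPre : forall i j, (i < N)%nat -> Pre i j -> (j < N)%nat /\ j <> i)
  (HPre_ne : forall i, (i < N)%nat -> exists j, Pre i j)
  (eps : nat -> nat -> R) (epsT : R)
  (Heps_supp : forall i j, (i < N)%nat -> (j < N)%nat -> (eps i j <> 0 <-> Pre i j))
  (Heps_sum : forall i, (i < N)%nat -> sumN N (eps i) = epsT)
  (Hexc : forall i j, (i < N)%nat -> (j < N)%nat -> 0 <= eps i j)
  (HepsT : 0 < epsT)
  (Hsmall : U tau + epsT < 1)
  (Ord : nat -> list nat)
  (HO_nodup : forall i, (i < N)%nat -> NoDup (Ord i))
  (HO_enum : forall i, (i < N)%nat -> forall j, In j (Ord i) <-> Pre i j) :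
  let p := p_coef U U1 Uinv tau epsT eps Ord in
  let A := stabA U U1 Uinv tau epsT eps Ord in
  let A0 := U1 tau / U1 (Uinv (U tau + epsT)) in
  (* 1 *)
  (forall i, (i < N)%nat ->
     (forall n, (n < length (Ord i))%nat -> p i n > p i (S n)) /\
     p i (length (Ord i)) = 1) /\
  (* 2 *)
  (forall i j, (i < N)%nat -> (j < N)%nat -> j <> i -> A i j <= 0) /\
  A0 > 1 /\
  (* 3 *)
  (forall lr li, is_eigenvalue N A lr li -> cmod (lr - A0) li <= A0 - 1) /\
  cmod (1 - A0) 0 <= A0 - 1 /\
  (forall x y, cmod (x - A0) y <= A0 - 1 -> 1 <= cmod x y /\ (cmod x y = 1 -> x = 1 /\ y = 0)) /\
  (forall lr li, is_eigenvalue N A lr li -> 1 <= cmod lr li).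
Proof.
  intros p A A0.
  assert (Hprof : phase_profile U U1 U2 Uinv I) by (constructor; assumption).
  set (h := response U U1 Uinv tau).
  assert (HUtau : 0 < U tau) by (rewrite <- HU0; apply (U_incr Hprof); try apply HI01; lra).
  assert (Hdec : forall s t, 0 <= s -> s < t -> t <= epsT -> h t < h s)
    by (intros; apply (response_decr Hprof); lra).
  assert (Hpos : 0 < h epsT) by (apply (response_pos Hprof); lra).
  assert (HA0 : A0 = h 0 / h epsT)
    by (unfold h; rewrite (response_zero Hprof) by (try apply HI01; lra); reflexivity).
  assert (Hrow : forall i, (i < N)%nat ->
            (forall j, In j (Ord i) -> 0 < eps i j) /\
            partial_sum (eps i) (Ord i) (length (Ord i)) = epsT).
  { intros i Hi. rewrite <- (Heps_sum i Hi).
    apply ordering_weights; auto.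
    - intros j Hj. now apply (HPre i j Hi), HO_enum.
    - intros j Hj. rewrite HO_enum by exact Hi. now apply Heps_supp. }
  assert (P1 : forall i, (i < N)%nat ->
            (forall n, (n < length (Ord i))%nat -> p i n > p i (S n)) /\
            p i (length (Ord i)) = 1)
    by (intros i Hi; destruct (Hrow i Hi); apply slope_chain; auto).
  assert (P2 : forall i j, (i < N)%nat -> (j < N)%nat -> j <> i -> A i j <= 0)
    by (intros i j Hi _ Hji; apply stabA_offdiag_nonpos; [apply P1 |]; auto).
  assert (HA0gt : A0 > 1) by (rewrite HA0; apply ratio_gt_1; [| apply Hdec]; lra).
  assert (P3 : forall lr li, is_eigenvalue N A lr li -> cmod (lr - A0) li <= A0 - 1).
  { intros lr li. apply gershgorin_common_center.
    - intros i _. unfold A, stabA. rewrite Nat.eqb_refl, HA0. reflexivity.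
    - intros i Hi. destruct (P1 i Hi) as [Hchain Hlast].
      unfold A. rewrite row_radius; auto.
      + unfold p in Hlast. rewrite Hlast.
        change (p_coef U U1 Uinv tau epsT eps Ord i 0) with (h 0 / h epsT).
        rewrite <- HA0. lra.
      + intros j Hj. apply (HPre i j Hi), HO_enum; auto. }
  assert (Hdisk : forall x y, cmod (x - A0) y <= A0 - 1 ->
            1 <= cmod x y /\ (cmod x y = 1 -> x = 1 /\ y = 0))
    by (intros x y; apply disk_outside_unit_disk; lra).
  refine (conj P1 (conj P2 (conj HA0gt (conj P3 (conj _ (conj Hdisk _)))))).
  - apply disk_contains_one. lra.
  - intros lr li Hev. apply Hdisk, P3, Hev.
Qed.
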